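(* Let $F\in L^2(\mu)$ and $m\in\mathbb N$. Then $F\in\mathcal D^{m,2}$ if and only if \[ \sup_{0<\lambda<1}\partial_\lambda^m\left(\int_{\mathcal S'_{\mathbb C}}|SF(\lambda u)|^2\,d\nu(u)\right)<\infty . \]
   Context: Let $\mu$ be the white noise (standard Gaussian) measure on the tempered distributions $\mathcal S'=\mathcal S'(\mathbb R;\mathbb R)$, i.e. $\int e^{i\langle\xi,x\rangle}d\mu(x)=e^{-|\xi|^2/2}$ for $\xi$ in the Schwartz space $\mathcal S$, where $|\cdot|$ is the $L^2(\mathbb R,dx)$ norm. Every $F\in L^2(\mu)$ (complex valued) has a Wiener–Itô chaos decomposition $F=\sum_{n\ge0}\langle F^{(n)},:\cdot^{\otimes n}:\rangle$ with symmetric kernels $F^{(n)}\in L^2(\mathbb R^n,dx)_{\mathbb C}$ and $\|F\|^2_{L^2(\mu)}=\sum_n n!|F^{(n)}|^2$. The $S$-transform is $SF(h)=\sum_n\langle F^{(n)},h^{\otimes n}\rangle$ for $h\in\mathcal S_{\mathbb C}$ (equivalently $SF(h)=\int\exp(\langle h,\omega\rangle-\tfrac12\langle h,h\rangle)F(\omega)d\mu(\omega)$). Let $\nu$ be the Gaussian measure on $\mathcal S'_{\mathbb C}$ with $\int\exp(i\,\mathrm{Re}\langle h,\bar u\rangle)d\nu(u)=\exp(-\tfrac14\langle h,\bar h\rangle)$; for square-integrable symmetric kernels the monomials $u\mapsto\langle F^{(n)},u^{\otimes n}\rangle$ are defined in $L^2(\nu)$, mutually orthogonal for different $n$, with $\int|\langle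 F^{(n)},u^{\otimes n}\rangle|^2d\nu=n!|F^{(n)}|^2$, and $SF(\lambda u):=\sum_n\lambda^n\langle F^{(n)},u^{\otimes n}\rangle$. For $\alpha\in\mathbb R$, the Malliavin–Watanabe–Sobolev space $\mathcal D^{\alpha,2}$ consists of those (generalized) chaos series $\Phi$ with square-integrable symmetric kernels $\Phi^{(n)}$ such that $\|\Phi\|^2_{\alpha,2}=\sum_{n\ge0}(1+n^\alpha)\,n!\,|\Phi^{(n)}|^2<\infty$. *)

From HB Require Import structures.
From mathcomp Require Import all_boot all_order all_algebra.
From mathcomp Require Import all_classical all_reals all_analysis.
Set Implicit Arguments. Unset Strict Implicit. Unset Printing Implicit Defensive.
Import Order.TTheory GRing.Theory Num.Theory numFieldNormedType.Exports.
Local Open Scope ring_scope.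
Local Open Scope classical_set_scope.

(* An element F of L^2(mu) is described through its Wiener-Ito chaos
   decomposition.  [kn n] stands for |F^(n)|^2, the squared L^2(R^n) norm of
   the n-th kernel (a nonnegative real).  *)

Definition in_L2mu (R : realType) (kn : nat -> R) : Prop :=
  (forall n, 0 <= kn n) /\ cvgn (series (fun n => n`!%:R * kn n)).

Definition in_Dm2 (R : realType) (m : nat) (kn : nat -> R) : Prop :=
  cvgn (series (fun n => (1 + n%:R ^+ m) * n`!%:R * kn n)).

(* The monomials u |-> <F^(n), u^{(x)n}> in L^2(nu), given by their real part
   [Mre n] and imaginary part [Mim n].  The hypotheses below are exactly the
   facts stated in the context: they lie in L^2(nu), are mutually orthogonal
   for different n (complex inner product  int M_n conj(M_k) dnu = 0),
   and int |M_n|^2 dnu = n! |F^(n)|^2. *)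
Definition monomials_of (R : realType) (d : measure_display)
  (U : measurableType d) (nu : probability U R) (kn : nat -> R)
  (Mre Mim : nat -> U -> R) : Prop :=
  [/\ (forall n, measurable_fun setT (Mre n) /\ measurable_fun setT (Mim n)),
      (forall n, nu.-integrable setT (fun u => ((Mre n u) ^+ 2)%:E) /\
                 nu.-integrable setT (fun u => ((Mim n u) ^+ 2)%:E)),
      (forall n, (\int[nu]_u ((Mre n u) ^+ 2 + (Mim n u) ^+ 2)%:E
                  = (n`!%:R * kn n)%:E)%E) &
      (forall n k, n != k ->
        (\int[nu]_u (Mre n u * Mre k u + Mim n u * Mim k u)%:E = 0)%E /\
        (\int[nu]_u (Mim n u * Mre k u - Mre n u * Mim k u)%:E = 0)%E)].

(* lambda |-> int |SF(lambda u)|^2 dnu(u), where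
   SF(lambda u) = sum_n lambda^n <F^(n), u^{(x)n}> is the L^2(nu)-limit of the
   partial sums; its squared norm is the limit of the squared norms of the
   partial sums. *)
Definition SF2_nu (R : realType) (d : measure_display)
  (U : measurableType d) (nu : probability U R) (Mre Mim : nat -> U -> R)
  (lam : R) : R :=
  limn (fun N : nat => fine (\int[nu]_u
      (((\sum_(n < N) lam ^+ n * Mre n u) ^+ 2 +
        (\sum_(n < N) lam ^+ n * Mim n u) ^+ 2)%:E))%E).

(* By orthogonality of the monomials, lam |-> int |SF(lam u)|^2 dnu is the power
   series g(lam) = sum_n a_n lam^(2n) with a_n = n! |F^(n)|^2 >= 0 and
   sum_n a_n < oo.  Inside the unit disc g can be differentiated termwise, so on
   (0,1) its m-th derivative is a power series with nonnegative coefficients;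
   such a series stays bounded as lam -> 1- iff the sum of its coefficients is
   finite.  That sum is sum_n (2n)_m a_n (falling factorial), which is finite
   iff sum_n n^m a_n is, because (2n)_m <= 2^m n^m and n^m <= m^m + (2n)_m. *)

From mathcomp Require Import all_boot all_order all_algebra.
From mathcomp Require Import all_classical all_reals all_analysis measurable_realfun.
From mathcomp Require Import ring lra.
Import Order.TTheory GRing.Theory Num.Theory numFieldNormedType.Exports.
Local Open Scope ring_scope.
Local Open Scope classical_set_scope.

Lemma ffact_leq_expn n m : (n ^_ m <= n ^ m)%N.
Proof.
elim: m => [|m IH]; first by rewrite ffactn0 expn0.
by rewrite ffactnSr expnSr leq_mul // leq_subr.
Qed.

Lemma expn_leq_ffact_double n m : (m <= n)%N -> (n ^ m <= n.*2 ^_ m)%N.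
Proof.
elim: m => [|m IH] mn; first by rewrite ffactn0 expn0.
rewrite ffactnSr expnSr leq_mul //; first exact/IH/ltnW.
by rewrite leq_subRL -?addnn ?leq_add2r // (leq_trans (ltnW mn)) // leq_addr.
Qed.

Lemma expn_leq_addn_ffact_double n m : (n ^ m <= m ^ m + n.*2 ^_ m)%N.
Proof.
have [mn|nm] := leqP m n.
  by rewrite (leq_trans (expn_leq_ffact_double _ _ mn)) ?leq_addl.
rewrite (leq_trans _ (leq_addr _ _)) // leq_exp2r; first exact: ltnW.
exact: leq_ltn_trans (leq0n n) nm.
Qed.

Lemma cvg_double : n.*2 @[n --> \oo] --> \oo.
Proof. by under eq_fun do rewrite -mul2n; exact: cvg_mulnl. Qed.

Lemma cvg_uphalf : uphalf n @[n --> \oo] --> \oo.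
Proof.
under eq_fun do rewrite uphalfE -divn2 -addn1.
by apply: (cvg_comp (addn^~ 1) (divn^~ 2)); [exact: cvg_addnr | exact: cvg_divnr].
Qed.

Section Series.
Context {R : realType}.
Implicit Types u v : nat -> R.

(* The coefficients of x |-> sum_n u n x^(2n). *)
Definition spread_even u i := if odd i then 0 else u i./2.

Lemma series_spread_even u : series (spread_even u) = series u \o uphalf.
Proof.
apply/funext; elim=> [|n IH]; first by rewrite /series /= !big_geq.
rewrite seriesSr IH /= uphalf_half /spread_even.
by case: odd; rewrite /= ?addr0 // seriesSr.
Qed.

Lemma is_cvg_series_spread_even u :
  cvgn (series (spread_even u)) <-> cvgn (series u).
Proof.
have uE : series u = series (spread_even u) \o double.
  by apply/funext => n; rewrite series_spread_even /= uphalf_double.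
split => /cvg_ex[l Cl]; apply/cvg_ex; exists l.
- by rewrite uE; apply: cvg_comp Cl; exact: cvg_double.
- by rewrite series_spread_even; apply: cvg_comp Cl; exact: cvg_uphalf.
Qed.

Lemma lim_series_spread_even u :
  cvgn (series u) -> limn (series (spread_even u)) = limn (series u).
Proof.
move=> Cu; rewrite series_spread_even; apply: cvg_lim => //.
by apply: cvg_comp Cu; exact: cvg_uphalf.
Qed.

Lemma series_shift v k : (forall i, (i < k)%N -> v i = 0) ->
  series (fun j => v (j + k)%N) = (fun J => series v (J + k)%N).
Proof.
move=> v0; apply/funext; elim=> [|J IH].
  by rewrite /series /= big_geq // add0n big_mkord big1 // => i _; exact: v0.
by rewrite seriesSr addSn seriesSr IH.
Qed.

Lemma is_cvg_series_shift v k : (forall i, (i < k)%N -> v i = 0) ->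
  cvgn (series (fun j => v (j + k)%N)) <-> cvgn (series v).
Proof.
move=> /series_shift ->.
split => /cvg_ex[l Cl]; apply/cvg_ex; exists l; first by rewrite -(cvg_shiftn k).
by rewrite (cvg_shiftn k).
Qed.

Lemma is_cvg_series_ffact_double (a : nat -> R) m :
  (forall n, 0 <= a n) -> cvgn (series a) ->
  cvgn (series (fun n => (n.*2 ^_ m)%:R * a n)) <->
  cvgn (series (fun n => (1 + n%:R ^+ m) * a n)).
Proof.
move=> a0 Ca; split => C.
- pose g := (1 + (m ^ m)%:R) *: a + (fun n => (n.*2 ^_ m)%:R * a n).
  have gE n : g n = (1 + (m ^ m)%:R) * a n + (n.*2 ^_ m)%:R * a n by [].
  apply: (@series_le_cvg _ _ g) => [n|n|n|].
  + by rewrite mulr_ge0.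
  + by rewrite gE addr_ge0 ?mulr_ge0 // addr_ge0.
  + rewrite gE -mulrDl ler_wpM2r // -addrA lerD2l -natrX -natrD ler_nat.
    exact: expn_leq_addn_ffact_double.
  + exact/is_cvg_seriesD/C/is_cvg_seriesZ.
- pose g := 2 ^+ m *: (fun n => (1 + n%:R ^+ m) * a n).
  have gE n : g n = 2 ^+ m * ((1 + n%:R ^+ m) * a n) by [].
  apply: (@series_le_cvg _ _ g) => [n|n|n|].
  + by rewrite mulr_ge0.
  + by rewrite gE !mulr_ge0 // exprn_ge0.
  + rewrite gE mulrA ler_wpM2r //.
    apply: (@le_trans _ _ (2 ^+ m * n%:R ^+ m)).
      by rewrite -exprMn -natrM -natrX ler_nat mul2n ffact_leq_expn.
    by rewrite ler_wpM2l ?exprn_ge0 // lerDr.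
  + exact/is_cvg_seriesZ.
Qed.

End Series.

Section PowerSeries.
Context {R : realType}.

Lemma natr_mul_expr_le (q : R) j : 0 <= q <= 1 -> j.+1%:R * q ^+ j * (1 - q) <= 1.
Proof.
move=> /andP[q0 q1]; elim: j => [|j IH]; first by rewrite mul1r expr0 mul1r; lra.
have qj0 : 0 <= q ^+ j by rewrite exprn_ge0.
have qj1 : q * q ^+ j <= 1 by rewrite -exprS exprn_ile1.
set J := j.+1%:R in IH *; rewrite exprS -natr1.
have := ler_wpM2l q0 IH; have : 0 <= 1 - q by lra.
nra.
Qed.

Lemma is_cvg_series_natr_expr (t : R) : 0 <= t < 1 ->
  cvgn (series (fun j => j.+1%:R * t ^+ j)).
Proof.
move=> /andP[t0 t1]; pose s := (1 + t) / 2; pose q := t / s.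
have s0 : 0 < s by rewrite /s; lra.
have q0 : 0 <= q by rewrite divr_ge0 // ltW.
have q1 : q < 1 by rewrite ltr_pdivrMr // mul1r /s; lra.
have tE : t = q * s by rewrite /q divfK // gt_eqF.
apply: (@series_le_cvg _ _ (geometric (1 - q)^-1 s)) => [j|j|j|].
- by rewrite mulr_ge0 // exprn_ge0.
- by rewrite geometric_ge0 // ?invr_ge0 ?subr_ge0 ?ltW.
- rewrite /geometric /= tE exprMn mulrA.
  apply: ler_wpM2r; first by rewrite exprn_ge0 // ltW.
  by rewrite -div1r ler_pdivlMr ?subr_gt0 // natr_mul_expr_le // q0 ltW.
- by apply: is_cvg_geometric_series; rewrite gtr0_norm // /s; lra.
Qed.

Lemma is_cvg_pseries_diffs (f : nat -> R) :
  (forall y : R, `|y| < 1 -> cvgn (pseries f y)) ->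
  forall y : R, `|y| < 1 -> cvgn (pseries (pseries_diffs f) y).
Proof.
move=> Cf y y1; pose r := (1 + `|y|) / 2.
have r0 : 0 < r by rewrite /r; have := normr_ge0 y; lra.
have yr : `|y| < r by rewrite /r; lra.
have r1 : `|r| < 1 by rewrite gtr0_norm // /r; lra.
have [B [_ HB]] := cvg_series_bounded (Cf r r1).
pose C := `|B| + 1.
have C0 : 0 <= C by rewrite /C; have := normr_ge0 B; lra.
have fC j : `|f j| * r ^+ j <= C.
  have BC : B < C by rewrite /C; have := ler_norm B; lra.
  by have := HB C BC j I; rewrite /= normrM normrX (gtr0_norm r0).
pose t := `|y| / r.
have t0 : 0 <= t by rewrite divr_ge0 // ltW.
have t01 : 0 <= t < 1 by rewrite t0 ltr_pdivrMr // mul1r.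
have yE : `|y| = t * r by rewrite /t divfK // gt_eqF.
pose g := (C / r) *: (fun j => j.+1%:R * t ^+ j).
have gE j : g j = C / r * (j.+1%:R * t ^+ j) by [].
apply: (@normed_cvg R R^o); apply: (@series_le_cvg _ _ g) => [j|j|j|].
- exact: normr_ge0.
- by rewrite gE !mulr_ge0 ?exprn_ge0 // invr_ge0 ltW.
- rewrite gE /= /pseries_diffs !normrM normrX yE exprMn ger0_norm ?ler0n //.
  have -> : j.+1%:R * `|f j.+1| * (t ^+ j * r ^+ j) =
            (j.+1%:R * t ^+ j) * ((`|f j.+1| * r ^+ j.+1) / r).
    by rewrite exprS; field; rewrite gt_eqF.
  rewrite mulrC; apply: ler_wpM2r; first by rewrite mulr_ge0 ?exprn_ge0.
  by apply: ler_wpM2r (fC j.+1); rewrite invr_ge0 ltW.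
- exact/is_cvg_seriesZ/is_cvg_series_natr_expr.
Qed.

Lemma iter_pseries_diffsE (f : nat -> R) k j :
  iter k (@pseries_diffs R) f j = ((j + k) ^_ k)%:R * f (j + k)%N.
Proof.
elim: k j => [|k IH] j; first by rewrite /= ffactn0 mul1r addn0.
rewrite iterS /pseries_diffs IH mulrA -natrM -addSnnS.
by rewrite ffactnSr addnK mulnC.
Qed.

Lemma pseries_spread_even (u : nat -> R) x :
  pseries (spread_even u) x = series (spread_even (fun n => u n * (x ^+ 2) ^+ n)).
Proof.
congr series; apply/funext => i; rewrite /spread_even /=.
case: ifP => oi; first by rewrite mul0r.
by rewrite -exprM mul2n; congr (_ * x ^+ _); have := odd_double_half i; rewrite oi add0n.
Qed.

Lemma is_cvg_pseries_iter_diffs (f : nat -> R) :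
  (forall y : R, `|y| < 1 -> cvgn (pseries f y)) ->
  forall k (y : R), `|y| < 1 -> cvgn (pseries (iter k (@pseries_diffs R) f) y).
Proof. by move=> Cf; elim=> [|k IH] y y1; [exact: Cf | exact: is_cvg_pseries_diffs]. Qed.

Lemma derive1n_pseries (f : nat -> R) (g : R -> R) :
  (forall y : R, `|y| < 1 -> cvgn (pseries f y)) ->
  (forall x : R, `|x| < 1 -> g x = limn (pseries f x)) ->
  forall k (x : R), `|x| < 1 ->
    derive1n k g x = limn (pseries (iter k (@pseries_diffs R) f) x).
Proof.
move=> Cf gE; have Ck := is_cvg_pseries_iter_diffs _ Cf.
elim=> [|k IH] x x1; first exact: gE.
rewrite derive1nS derive1E.
pose h z := limn (pseries (iter k (@pseries_diffs R) f) z).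
rewrite (near_eq_derive (g := h)); last first.
  by near=> z; apply: IH; near: z; exact: (cvgr_norm_lt (f := id) x cvg_id _ x1).
pose K := (1 + `|x|) / 2.
have x0 := normr_ge0 x.
have K0 : 0 <= K by rewrite /K; lra.
have K1 : `|K| < 1 by rewrite (ger0_norm K0) /K; lra.
have xK : `|x| < `|K| by rewrite (ger0_norm K0) /K; lra.
exact/derive_val/(pseries_snd_diffs (Ck k K K1) (Ck k.+1 K K1) (Ck k.+2 K K1) xK).
Unshelve. all: by end_near.
Qed.

Lemma nneg_pseries_bounded_iff_is_cvg_series (b : nat -> R) :
  (forall j, 0 <= b j) -> (forall l : R, 0 < l < 1 -> cvgn (pseries b l)) ->
  (exists M, forall l : R, 0 < l < 1 -> limn (pseries b l) <= M) <->
  cvgn (series b).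
Proof.
move=> b0 Cb; split => [[M bM]|Cs].
- apply: nondecreasing_is_cvgn; first exact: nondecreasing_series.
  (* A partial sum, being a polynomial in l, is the limit of its values as l -> 1-. *)
  exists M => _ [N _ <-]; pose p := \poly_(j < N) b j.
  have pE l : p.[l] = pseries b l N by rewrite horner_poly /pseries /series /= big_mkord.
  have -> : series b N = p.[1].
    by rewrite pE /pseries /series /=; apply: eq_bigr => j _; rewrite expr1n mulr1.
  have cp : p.[l] @[l --> 1^'-] --> p.[1].
    exact: cvg_at_left_filter (@continuous_horner R p 1).
  rewrite -(cvg_lim _ cp) //; apply: limr_le; first by apply/cvg_ex; exists p.[1].
  near=> l; have l01 : 0 < l < 1.
    by apply/andP; split; near: l; [exact: nbhs_left_gt | exact: nbhs_left_lt].
  rewrite pE; apply: le_trans (bM l l01); apply: nondecreasing_cvgn_le; last exact: Cb.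
  apply: nondecreasing_series => j _ _; case/andP: l01 => l0 _.
  by rewrite mulr_ge0 // exprn_ge0 // ltW.
- exists (limn (series b)) => l l01; apply: lim_series_le; [exact: Cb | exact: Cs |].
  by case/andP: l01 => l0 l1 j; rewrite ler_piMr // exprn_ile1 // ltW.
Unshelve. all: by end_near.
Qed.

Lemma is_cvg_pseries_nneg (a : nat -> R) r : (forall n, 0 <= a n) ->
  cvgn (series a) -> 0 <= r <= 1 -> cvgn (pseries a r).
Proof.
move=> a0 Ca /andP[r0 r1]; apply: series_le_cvg Ca => n; [|exact: a0|].
- by rewrite mulr_ge0 // exprn_ge0.
- by apply: ler_piMr; [exact: a0 | exact: exprn_ile1].
Qed.

Lemma is_cvg_series_iter_diffs_spread_even (u : nat -> R) m :
  cvgn (series (iter m (@pseries_diffs R) (spread_even u))) <->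
  cvgn (series (fun n => (n.*2 ^_ m)%:R * u n)).
Proof.
pose v i := (i ^_ m)%:R * spread_even u i.
have v0 i : (i < m)%N -> v i = 0 by move=> im; rewrite /v ffact_small ?mul0r.
have vE : v = spread_even (fun n => (n.*2 ^_ m)%:R * u n).
  apply/funext => i; rewrite /v /spread_even; case: ifP => oi; first by rewrite mulr0.
  by have := odd_double_half i; rewrite oi add0n => ->.
have -> : iter m (@pseries_diffs R) (spread_even u) = fun j => v (j + m)%N.
  by apply/funext => j; rewrite iter_pseries_diffsE.
by rewrite (is_cvg_series_shift v m v0) vE is_cvg_series_spread_even.
Qed.

Lemma derive1n_even_pseries_bounded_iff (a : nat -> R) (g : R -> R) m :
  (forall n, 0 <= a n) -> cvgn (series a) ->
  (forall x, `|x| < 1 -> g x = limn (pseries a (x ^+ 2))) ->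
  (exists M, forall l, 0 < l < 1 -> derive1n m g l <= M) <->
  cvgn (series (fun n => (1 + n%:R ^+ m) * a n)).
Proof.
move=> a0 Ca gE; pose b := iter m (@pseries_diffs R) (spread_even a).
have Cx x : `|x| <= 1 -> cvgn (pseries a (x ^+ 2)).
  move=> x1; apply: is_cvg_pseries_nneg; rewrite // sqr_ge0 /=.
  by rewrite -(real_normK (num_real x)) exprn_ile1.
have Cc y : `|y| < 1 -> cvgn (pseries (spread_even a) y).
  by move=> y1; rewrite pseries_spread_even is_cvg_series_spread_even; exact/Cx/ltW.
have ge : forall x, `|x| < 1 -> g x = limn (pseries (spread_even a) x).
  move=> x x1; rewrite gE // pseries_spread_even lim_series_spread_even //.
  exact/Cx/ltW.
have derE l : 0 < l < 1 -> derive1n m g l = limn (pseries b l).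
  by case/andP=> l0 l1; rewrite (derive1n_pseries _ _ Cc ge) // gtr0_norm.
have Cb l : 0 < l < 1 -> cvgn (pseries b l).
  by case/andP=> l0 l1; apply: (is_cvg_pseries_iter_diffs _ Cc); rewrite gtr0_norm.
have b0 j : 0 <= b j.
  by rewrite /b iter_pseries_diffsE mulr_ge0 // /spread_even; case: odd.
rewrite -is_cvg_series_ffact_double // -is_cvg_series_iter_diffs_spread_even.
rewrite -nneg_pseries_bounded_iff_is_cvg_series //.
split=> -[M HM]; exists M => l l01; first by rewrite -derE //; apply: HM.
by rewrite derE //; apply: HM.
Qed.

End PowerSeries.

Section Orthogonality.
Context {R : realType} {d : measure_display} {U : measurableType d}.

Lemma integrable_mul_of_sqr (mu : {measure set U -> \bar R}) (f g : U -> R) :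
  measurable_fun setT f -> measurable_fun setT g ->
  mu.-integrable setT (fun u => (f u ^+ 2)%:E) ->
  mu.-integrable setT (fun u => (g u ^+ 2)%:E) ->
  mu.-integrable setT (fun u => (f u * g u)%:E).
Proof.
move=> mf mg If Ig.
apply: (@le_integrable _ _ _ _ _ measurableT _ (fun u => (f u ^+ 2 + g u ^+ 2)%:E)).
- by apply/measurable_EFinP; exact: measurable_funM.
- move=> u _; rewrite !abse_EFin lee_fin ler_norml.
  rewrite (ger0_norm (addr_ge0 (sqr_ge0 _) (sqr_ge0 _))).
  have := sqr_ge0 (f u - g u); have := sqr_ge0 (f u + g u).
  by move=> ? ?; apply/andP; split; nra.
- exact: (integrableD measurableT If Ig).
Qed.

Context {nu : probability U R} {kn : nat -> R} {Mre Mim : nat -> U -> R}.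
Hypothesis monoms : monomials_of nu kn Mre Mim.

Let cross n k u := Mre n u * Mre k u + Mim n u * Mim k u.

Let integrable_cross n k : nu.-integrable setT (fun u => (cross n k u)%:E).
Proof.
case: monoms => mM iM _ _.
have := integrableD measurableT
  (integrable_mul_of_sqr _ _ _ (mM n).1 (mM k).1 (iM n).1 (iM k).1)
  (integrable_mul_of_sqr _ _ _ (mM n).2 (mM k).2 (iM n).2 (iM k).2).
by apply: eq_integrable => // u _; rewrite EFinD.
Qed.

Let integral_cross n k : (\int[nu]_u (cross n k u)%:E =
  if n == k then (n`!%:R * kn n)%:E else 0)%E.
Proof.
case: monoms => _ _ normM orthM; case: eqVneq => [<-|nk]; last exact: (orthM n k nk).1.
by rewrite -normM; apply: eq_integral => u _; rewrite /cross -!expr2.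
Qed.

Lemma integral_sqr_norm_sum (c : nat -> R) N :
  (\int[nu]_u (((\sum_(n < N) c n * Mre n u) ^+ 2 +
               (\sum_(n < N) c n * Mim n u) ^+ 2)%:E))%E
  = (\sum_(n < N) c n ^+ 2 * (n`!%:R * kn n))%:E.
Proof.
pose P n k u := c n * c k * cross n k u.
have Pint n k : nu.-integrable setT (fun u => (P n k u)%:E).
  have := integrableZl measurableT (c n * c k) (integrable_cross n k).
  by apply: eq_integrable => // u _; rewrite EFinM.
have PE u : (\sum_(n < N) c n * Mre n u) ^+ 2 + (\sum_(n < N) c n * Mim n u) ^+ 2 =
            \sum_(n < N) \sum_(k < N) P n k u.
  rewrite !expr2 !mulr_suml -big_split; apply: eq_bigr => n _.
  by rewrite !mulr_sumr -big_split; apply: eq_bigr => k _; rewrite /P /cross /=; ring.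
under eq_integral do rewrite PE -sumEFin.
rewrite integral_sum //; last first.
  move=> n; have := @integrable_sum _ _ _ nu setT measurableT _ (index_enum 'I_N) xpredT
    (fun k u => (P n k u)%:E) (fun k _ => Pint n k).
  by apply: eq_integrable => // u _; rewrite sumEFin.
rewrite -sumEFin; apply: eq_bigr => n _.
under eq_integral do rewrite -sumEFin.
rewrite integral_sum // (bigD1 n) //= big1 ?adde0 => [|k kNn].
  under eq_integral do rewrite EFinM.
  by rewrite integralZl // integral_cross eqxx -EFinM expr2.
under eq_integral do rewrite EFinM.
rewrite integralZl // integral_cross; case: eqP => [nk|_]; last by rewrite mule0.
by move/eqP: kNn; case; apply: val_inj.
Qed.

Lemma SF2_nuE lam :
  SF2_nu nu Mre Mim lam = limn (pseries (fun n => n`!%:R * kn n) (lam ^+ 2)).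
Proof.
rewrite /SF2_nu; congr (limn _); apply/funext => N.
rewrite integral_sqr_norm_sum /= /pseries /series /= big_mkord; apply: eq_bigr => n _.
by rewrite -!exprM mulnC mulrC.
Qed.

End Orthogonality.

Theorem theorem2p8 (R : realType) (d : measure_display) (U : measurableType d)
  (nu : probability U R) (kn : nat -> R) (Mre Mim : nat -> U -> R) (m : nat) :
  in_L2mu kn ->
  monomials_of nu kn Mre Mim ->
  (in_Dm2 m kn <->
   exists M : R, forall lam : R, 0 < lam < 1 ->
     derive1n m (SF2_nu nu Mre Mim) lam <= M).
Proof.
move=> [kn_ge0 Ca] monoms.
have DmE : (fun n => (1 + n%:R ^+ m) * n`!%:R * kn n) =
           (fun n => (1 + n%:R ^+ m) * (n`!%:R * kn n)).
  by apply/funext => n; rewrite mulrA.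
rewrite /in_Dm2 DmE; symmetry.
apply: (derive1n_even_pseries_bounded_iff _ _ _ _ Ca) => [n|x _].
  by rewrite mulr_ge0.
exact: SF2_nuE.
Qed.
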